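(* Consider a SOCO problem with decision space $F=[x_L,x_H]$ and a sequence of discrete systems, indexed by $i$, whose state spacings $\delta_i$ tend to $0$ and each of which has $[x_1,x_m]=F$. Let $x_i=(x_i^t)_t$ denote the output of DRBG($N$) in the $i$-th discrete system and $\hat x=(\hat x^t)_t$ the output of RBG($N$) in the continuous system, all using the same random number $r$. Then with probability $1$, for all $t$, $\lim_{i\to\infty}|x_i^t-\hat x^t|=0$.
   Context: $F=[x_L,x_H]\subseteq\mathbb{R}^+$; $\|\cdot\|$ a norm on $\mathbb{R}$; $\theta\ge1$, $N(\cdot)=\theta\|\cdot\|$; cost functions $c^t:F\to\mathbb{R}^+$ convex (finite on $F$) with uniformly bounded subgradients. A discrete system is a set of states $M=\{x_1<\dots<x_m\}\subseteq F$ with equal spacing $\delta=x_{k+1}-x_k$, $x_1=x_L$, $x_m=x_H$, using the restrictions of $c^t$ to $M$. RBG($N$): $w^0(x)=N(x)$, $w^t(x)=\min_{y\in F}\{w^{t-1}(y)+c^t(y)+N(x-y)\}$, draw $r$ uniformly from $(-1,1)$, and at time $t$ choose $x^t\in F$ minimizing $Y^t(x)=w^{t-1}(x)+rN(x)$. DRBG($N$) is identical with $F$ replaced by $M$ both in the work function minimization and in the choice of $x^t$. Probability is over $r$. *)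

From HB Require Import structures.
From mathcomp Require Import all_boot all_order all_algebra.
From mathcomp Require Import all_classical all_reals all_analysis.
Set Implicit Arguments. Unset Strict Implicit. Unset Printing Implicit Defensive.
Import Order.TTheory GRing.Theory Num.Theory.
Import numFieldNormedType.Exports.
Local Open Scope classical_set_scope.
Local Open Scope ring_scope.

Definition is_norm (R : realType) (nrm : R -> R) : Prop :=
  [/\ forall x, 0 <= nrm x,
      forall x, nrm x = 0 -> x = 0,
      forall a x, nrm (a * x) = `|a| * nrm x &
      forall x y, nrm (x + y) <= nrm x + nrm y].

Definition Fset (R : realType) (xL xH : R) : set R := [set x | xL <= x <= xH].

Definition convex_on (R : realType) (S : set R) (f : R -> R) : Prop :=
  forall x y l, S x -> S y -> 0 <= l <= 1 ->
    f (l * x + (1 - l) * y) <= l * f x + (1 - l) * f y.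

Definition unif_bounded_subgrad (R : realType) (S : set R) (c : nat -> R -> R) : Prop :=
  exists G : R, forall t x, S x ->
    exists g : R, `|g| <= G /\ forall y, S y -> c t x + g * (y - x) <= c t y.

(* Spacing of the discrete system with m equally spaced states x_1 = xL, x_m = xH. *)
Definition spacing (R : realType) (xL xH : R) (m : nat) : R :=
  (xH - xL) / (m.-1)%:R.

(* The state set M = {x_1 < ... < x_m}, x_k = xL + (k-1) * delta. *)
Definition grid (R : realType) (xL xH : R) (m : nat) : set R :=
  [set xL + k%:R * spacing xL xH m | k in [set k : nat | (k < m)%N]].

(* Work function of RBG(N)/DRBG(N) over the state set S:
   w^0(x) = N(x), w^t(x) = min_{y in S} { w^{t-1}(y) + c^t(y) + N(x - y) }.
   (All terms are nonnegative and the minimum is attained, so inf = min.) *)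
Fixpoint work (R : realType) (S : set R) (N : R -> R) (c : nat -> R -> R) (t : nat)
  : R -> R :=
  match t with
  | 0 => N
  | t'.+1 => fun x =>
      inf [set work S N c t' y + c t y + N (x - y) | y in S]
  end.

(* x is a valid choice of x^t (t >= 1) of the algorithm over S with random number r:
   x in S minimizes Y^t(z) = w^{t-1}(z) + r N(z) over S. *)
Definition is_output (R : realType) (S : set R) (N : R -> R) (c : nat -> R -> R)
  (r : R) (t : nat) (x : R) : Prop :=
  S x /\ forall z, S z ->
    work S N c t.-1 x + r * N x <= work S N c t.-1 z + r * N z.

From HB Require Import structures.
From mathcomp Require Import all_boot all_order all_algebra.
From mathcomp Require Import all_classical all_reals all_analysis.
From mathcomp Require Import ring lra.
Set Implicit Arguments. Unset Strict Implicit. Unset Printing Implicit Defensive.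
Import Order.TTheory GRing.Theory Num.Theory.
Import numFieldNormedType.Exports.
Local Open Scope classical_set_scope.
Local Open Scope ring_scope.

(* Snapping a continuous minimizer to the nearest grid point shows that the
   discrete work function exceeds the continuous one by O(t d) and never falls
   below it, so every discrete output of round t + 1 is an O(d)-minimizer of the
   continuous objective Y(z) = w^t(z) + r N(z).  On F, contained in R+, N is
   increasing, so the minimizers of Y move monotonically in r: only countably
   many r (each pinned by a rational strictly between two of its minimizers)
   admit two minimizers.  For every other r, Y is continuous with a unique
   minimizer on the compact F, and near-minimizers converge to it. *)

Lemma inf_ge0 (R : realType) (E : set R) : lbound E 0 -> 0 <= inf E.
Proof.
move=> E0; have [[x Ex]|/nonemptyPn->] := pselect (E !=set0); last by rewrite inf0.
by apply: lb_le_inf => //; exists x.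
Qed.

Lemma lip_coef_ge0 (R : realType) (f : R -> R) (k : R) :
  (forall x y, f x <= f y + k * `|x - y|) -> 0 <= k.
Proof.
move=> f_lip; have := f_lip 0 1; have := f_lip 1 0.
by rewrite subr0 sub0r normrN normr1 mulr1; lra.
Qed.

Lemma lip_dist (R : realType) (f : R -> R) (k : R) :
  (forall x y, f x <= f y + k * `|x - y|) -> forall x y, `|f x - f y| <= k * `|x - y|.
Proof.
move=> f_lip x y; have := f_lip x y; have := f_lip y x.
by rewrite distrC ler_norml => ? ?; apply/andP; split; lra.
Qed.

Lemma lip_continuous (R : realType) (f : R -> R) (k : R) :
  (forall x y, f x <= f y + k * `|x - y|) -> continuous f.
Proof.
move=> f_lip x; have k_ge0 := lip_coef_ge0 f_lip.
apply/cvgrPdist_le => e e_gt0; have ek_gt0 : 0 < e / (k + 1) by rewrite divr_gt0 //; lra.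
near=> y; have xy_le : `|x - y| <= e / (k + 1) by near: y; exact: cvgr_dist_le.
apply: le_trans (lip_dist f_lip x y) _; apply: le_trans (_ : _ <= (k + 1) * `|x - y|) _.
  by rewrite mulrDl mul1r lerDl.
by rewrite mulrC -ler_pdivlMr //; lra.
Unshelve. all: by end_near.
Qed.

Lemma unif_bounded_subgrad_lip (R : realType) (S : set R) (c : nat -> R -> R) x0 :
  S x0 -> unif_bounded_subgrad S c ->
  exists2 G, 0 <= G & forall t x y, S x -> S y -> c t x <= c t y + G * `|x - y|.
Proof.
move=> Sx0 [G c_subgrad]; exists G.
  by have [g [g_le _]] := c_subgrad 0%N x0 Sx0; apply: le_trans g_le.
move=> t x y Sx Sy; have [g [g_le g_sub]] := c_subgrad t x Sx.
have : - (g * (y - x)) <= G * `|x - y|.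
  by apply: le_trans (ler_norm _) _; rewrite normrN normrM distrC ler_wpM2r.
by have := g_sub y Sy; lra.
Qed.

Section scaled_norm.
Variables (R : realType) (nrm : R -> R) (theta : R).
Hypotheses (nrm_norm : is_norm nrm) (theta_gt0 : 0 < theta).

Lemma is_normE x : nrm x = `|x| * nrm 1.
Proof. by case: nrm_norm => _ _ nrmM _; rewrite -nrmM mulr1. Qed.

Lemma is_norm1_gt0 : 0 < nrm 1.
Proof.
case: nrm_norm => nrm_ge0 nrm_eq0 _ _; rewrite lt_neqAle nrm_ge0 andbT.
by apply/eqP => /esym/nrm_eq0/eqP; rewrite oner_eq0.
Qed.

Lemma scaled_norm_ge0 x : 0 <= theta * nrm x.
Proof. by case: nrm_norm => nrm_ge0 _ _ _; apply: mulr_ge0 => //; exact: ltW. Qed.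

Lemma scaled_norm_lip x y :
  theta * nrm x <= theta * nrm y + theta * nrm 1 * `|x - y|.
Proof.
case: nrm_norm => _ _ _ nrmD; have := nrmD y (x - y); rewrite addrC subrK.
by rewrite -mulrA (mulrC (nrm 1)) -is_normE -mulrDr => /ler_wpM2l; apply; rewrite ltW.
Qed.

Lemma scaled_norm_ler x y : 0 <= x -> 0 <= y ->
  theta * nrm x <= theta * nrm y -> x <= y.
Proof.
move=> x0 y0; rewrite (is_normE x) (is_normE y) !ger0_norm //.
by rewrite ler_pM2l // ler_pM2r // is_norm1_gt0.
Qed.

End scaled_norm.

Lemma Fset_left (R : realType) (xL xH : R) : xL <= xH -> Fset xL xH xL.
Proof. by move=> xLH; rewrite /Fset /= lexx. Qed.

Section grid.
Variables (R : realType) (xL xH : R) (m : nat).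
Hypotheses (xLH : xL < xH) (m_gt1 : (1 < m)%N).
Local Notation d := (spacing xL xH m).

Lemma spacing_ge0 : 0 <= d.
Proof. by rewrite divr_ge0 // subr_ge0 ltW. Qed.

Lemma spacing_last : (m.-1)%:R * d = xH - xL.
Proof. by rewrite mulrC divfK // pnatr_eq0; case: m m_gt1 => [|[]]. Qed.

Lemma grid_xL : grid xL xH m xL.
Proof. by exists 0%N; [exact: ltnW m_gt1|rewrite mul0r addr0]. Qed.

Lemma grid_sub : grid xL xH m `<=` Fset xL xH.
Proof.
move=> _ [k /= km <-]; have km1 : (k <= m.-1)%N by rewrite -ltnS prednK // ltnW.
have : k%:R * d <= xH - xL by rewrite -spacing_last ler_wpM2r ?spacing_ge0 ?ler_nat.
have : 0 <= k%:R * d by rewrite mulr_ge0 ?spacing_ge0.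
by move=> ? ?; apply/andP; split; lra.
Qed.

Lemma grid_near y : Fset xL xH y -> exists2 g, grid xL xH m g & `|g - y| <= d.
Proof.
move=> /andP[Ly yH].
have near_n n : y <= xL + n%:R * d ->
    exists2 k, (k <= n)%N & `|xL + k%:R * d - y| <= d.
  elim: n => [|n IH] yn.
    exists 0%N => //; rewrite mul0r addr0 in yn *.
    have -> : xL - y = 0 by lra.
    by rewrite normr0 spacing_ge0.
  have [yn'|yn'] := leP y (xL + n%:R * d).
    by have [k kn yk] := IH yn'; exists k => //; apply: leqW.
  exists n.+1 => //; rewrite -natr1 mulrDl mul1r in yn *.
  by rewrite ger0_norm; lra.
have [|k km yk] := near_n m.-1; first by rewrite spacing_last; lra.
exists (xL + k%:R * d) => //; exists k => //=.
by move: km; rewrite -ltnS prednK // ltnW.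
Qed.

End grid.

Section work_function.
Variables (R : realType) (N : R -> R) (a : R) (c : nat -> R -> R) (xL xH : R).
Hypotheses (N_ge0 : forall x, 0 <= N x)
  (N_lip : forall x y, N x <= N y + a * `|x - y|)
  (c_ge0 : forall t x, Fset xL xH x -> 0 <= c t x).
Local Notation F := (Fset xL xH).

Lemma scale_lip r x y : `|r| <= 1 -> r * N x <= r * N y + a * `|x - y|.
Proof.
move=> r_le1; rewrite -lerBlDl -mulrBr; apply: le_trans (ler_norm _) _.
rewrite normrM; apply: le_trans (ler_wpM2r (normr_ge0 _) r_le1) _.
by rewrite mul1r (lip_dist N_lip).
Qed.

Lemma workS S t x :
  work S N c t.+1 x = inf [set work S N c t y + c t.+1 y + N (x - y) | y in S].
Proof. by []. Qed.

Section subset.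
Variable S : set R.
Hypothesis SF : S `<=` F.

Lemma work_ge0 t x : 0 <= work S N c t x.
Proof.
elim: t x => [|t IH] x; first exact: N_ge0.
apply: inf_ge0 => _ [y Sy <-].
by rewrite !addr_ge0 ?IH ?N_ge0 //; apply/c_ge0/SF.
Qed.

Lemma work_le t x y : S y ->
  work S N c t.+1 x <= work S N c t y + c t.+1 y + N (x - y).
Proof.
move=> Sy; apply: ge_inf; last by exists y.
exists 0 => _ [z Sz <-].
by rewrite !addr_ge0 ?work_ge0 ?N_ge0 //; apply/c_ge0/SF.
Qed.

Lemma work_lip t x x' : work S N c t x <= work S N c t x' + a * `|x - x'|.
Proof.
case: t => [|t]; first exact: N_lip.
have [[y0 Sy0]|/nonemptyPn S0] := pselect (S !=set0); last first.
  by rewrite !workS S0 !image_set0 inf0 add0r mulr_ge0 ?(lip_coef_ge0 N_lip).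
rewrite -lerBlDr; apply: lb_le_inf => [|_ [y Sy <-]].
  by exists (work S N c t y0 + c t.+1 y0 + N (x' - y0)), y0.
rewrite lerBlDr (le_trans (work_le t x Sy)) // -!addrA !lerD2l.
by have := N_lip (x - y) (x' - y); rewrite opprB addrA subrK.
Qed.

End subset.

Section grid_approximation.
Variables (m : nat) (G : R).
Hypotheses (xLH : xL < xH) (m_gt1 : (1 < m)%N) (G_ge0 : 0 <= G)
  (c_lip : forall t x y, F x -> F y -> c t x <= c t y + G * `|x - y|).
Local Notation M := (grid xL xH m).
Local Notation d := (spacing xL xH m).

Lemma work_le_grid t x : work F N c t x <= work M N c t x.
Proof.
elim: t x => [|t IH] x; first exact: lexx.
rewrite [leRHS]workS; apply: lb_le_inf => [|_ [y My <-]].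
  by exists (work M N c t xL + c t.+1 xL + N (x - xL)), xL => //; apply: grid_xL.
apply: le_trans (work_le (@subset_refl _ F) t x (grid_sub xLH m_gt1 My)) _.
by rewrite !lerD2r.
Qed.

Lemma work_grid_le t x :
  work M N c t x <= work F N c t x + t%:R * ((G + a + a) * d).
Proof.
elim: t x => [|t IH] x; first by rewrite mul0r addr0.
have a_ge0 := lip_coef_ge0 N_lip.
rewrite [work F _ _ _ _]workS -lerBlDr; apply: lb_le_inf => [|_ [y Fy <-]].
  by exists (work F N c t xL + c t.+1 xL + N (x - xL)), xL => //; apply/Fset_left/ltW.
rewrite lerBlDr; have [g Mg gy] := grid_near xLH m_gt1 Fy.
have := work_le (grid_sub xLH m_gt1) t x Mg.
have := IH g; have := work_lip (@subset_refl _ F) t g y.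
have := c_lip t.+1 (grid_sub xLH m_gt1 Mg) Fy.
have := N_lip (x - g) (x - y); have -> : x - g - (x - y) = y - g by ring.
have : a * `|g - y| <= a * d by rewrite ler_wpM2l.
have : G * `|g - y| <= G * d by rewrite ler_wpM2l.
rewrite distrC -natr1 !mulrDl mul1r; lra.
Qed.

Lemma grid_output_near_opt r t u z : `|r| <= 1 -> is_output M N c r t.+1 u -> F z ->
  work F N c t u + r * N u <=
  work F N c t z + r * N z + (t%:R * (G + a + a) + a + a) * d.
Proof.
move=> r_le1 [_ u_min] Fz; have [g Mg gz] := grid_near xLH m_gt1 Fz.
have := work_le_grid t u; have := u_min g Mg.
have := work_grid_le t g; have := work_lip (@subset_refl _ F) t g z.
have := scale_lip g z r_le1.
have : a * `|g - z| <= a * d by rewrite ler_wpM2l ?(lip_coef_ge0 N_lip).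
rewrite /= !mulrDl; lra.
Qed.

End grid_approximation.
End work_function.

Section output_uniqueness.
Variables (R : realType) (N : R -> R) (c : nat -> R -> R) (S : set R).
Hypothesis N_ler : {in S &, forall x y, N x <= N y -> x <= y}.

Lemma output_anti r1 r2 t u v : r1 < r2 ->
  is_output S N c r1 t u -> is_output S N c r2 t v -> v <= u.
Proof.
move=> r12 [Su u_min] [Sv v_min]; apply: N_ler; rewrite ?inE //.
rewrite -(ler_pM2l (_ : 0 < r2 - r1)) ?subr_gt0 //.
by have := u_min v Sv; have := v_min u Su; lra.
Qed.

Definition ambiguous_at t (q : rat) := [set r : R | exists z1 z2,
  z1 < ratr q < z2 /\ is_output S N c r t z1 /\ is_output S N c r t z2].

Definition ambiguous := \bigcup_(p in [set: nat * rat]) ambiguous_at p.1 p.2.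

Lemma ambiguous_at_eq t q r1 r2 : ambiguous_at t q r1 -> ambiguous_at t q r2 -> r1 = r2.
Proof.
move=> [u1 [u2 [/andP[u1q qu2] [out_u1 out_u2]]]].
move=> [v1 [v2 [/andP[v1q qv2] [out_v1 out_v2]]]].
apply/eqP; case: ltgtP => // [r12|r21].
  by have := output_anti r12 out_u1 out_v2; lra.
by have := output_anti r21 out_v1 out_u2; lra.
Qed.

Lemma ambiguous_negligible : (@lebesgue_measure R).-negligible ambiguous.
Proof.
have ambiguous_countable : countable ambiguous.
  apply: bigcup_countable => // -[t q] _.
  have [[r0 r0_amb]|/nonemptyPn->] := pselect (ambiguous_at t q !=set0); last exact: countable0.
  apply: (sub_countable _ (countable1 r0)); apply: subset_card_le => r r_amb.
  exact: ambiguous_at_eq r_amb r0_amb.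
exists ambiguous; split => //; last exact: countable_lebesgue_measure0.
by apply: countable_measurable => // z; exact: measurable_set1.
Qed.

Lemma output_unique r t z1 z2 : ~ ambiguous r ->
  is_output S N c r t z1 -> is_output S N c r t z2 -> z1 = z2.
Proof.
move=> r_unamb out1 out2; apply/eqP; case: ltgtP => // [z12|z21]; exfalso; apply: r_unamb.
  by have [q zq] := rat_in_itvoo z12; exists (t, q) => //; exists z1, z2.
by have [q zq] := rat_in_itvoo z21; exists (t, q) => //; exists z2, z1.
Qed.

End output_uniqueness.

Section strict_argmin.
Variables (R : realType) (Y : R -> R).
Hypothesis Y_cont : continuous Y.

Lemma min_gap y0 u v : (forall z, u <= z <= v -> y0 < Y z) ->
  exists2 eta, 0 < eta & forall z, u <= z <= v -> y0 + eta <= Y z.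
Proof.
move=> Y_gt; have [uv|vu] := leP u v; last by exists 1 => // z /andP[]; lra.
have [z0 + z0_min] := EVT_min uv (continuous_subspaceT Y_cont).
rewrite in_itv /= => z0_uv; exists (Y z0 - y0) => [|z z_uv].
  by rewrite subr_gt0 Y_gt.
by rewrite addrC subrK z0_min // in_itv.
Qed.

Lemma cvg_strict_argmin lo hi xs (u eps : nat -> R) : lo <= xs <= hi ->
  (forall z, lo <= z <= hi -> z != xs -> Y xs < Y z) ->
  (forall i, lo <= u i <= hi) -> (forall i, Y (u i) <= Y xs + eps i) ->
  eps @ \oo --> 0 -> (fun i => `|u i - xs|) @ \oo --> 0.
Proof.
move=> /andP[lo_xs xs_hi] xs_argmin u_in u_le eps_cvg0; apply/cvgrPdist_lt => e e_gt0.
have [|eta1 eta1_gt0 gap1] := @min_gap (Y xs) lo (xs - e).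
  by move=> z /andP[? ?]; apply: xs_argmin; [apply/andP; split|rewrite lt_eqF]; lra.
have [|eta2 eta2_gt0 gap2] := @min_gap (Y xs) (xs + e) hi.
  by move=> z /andP[? ?]; apply: xs_argmin; [apply/andP; split|rewrite gt_eqF]; lra.
have eta_gt0 : 0 < Num.min eta1 eta2 by rewrite lt_min eta1_gt0.
have [eta_le1 eta_le2] : Num.min eta1 eta2 <= eta1 /\ Num.min eta1 eta2 <= eta2.
  by split; rewrite ge_min lexx ?orbT.
move/cvgrPdist_lt: eps_cvg0 => /(_ _ eta_gt0); apply: filterS => i.
rewrite sub0r normrN => /(le_lt_trans (ler_norm _)) eps_lt.
have Yu_le := u_le i; have /andP[lo_u u_hi] := u_in i.
rewrite sub0r normrN normr_id ltNge; apply/negP; rewrite ler_normr => /orP[] e_le.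
  have /gap2 : xs + e <= u i <= hi by apply/andP; split; lra.
  lra.
have /gap1 : lo <= u i <= xs - e by apply/andP; split; lra.
lra.
Qed.

End strict_argmin.

Theorem lemma11 (R : realType) (xL xH : R) (nrm : R -> R) (theta : R)
  (c : nat -> R -> R) (m : nat -> nat) :
  0 <= xL -> xL < xH ->
  is_norm nrm -> 1 <= theta ->
  (forall t x, Fset xL xH x -> 0 <= c t x) ->
  (forall t, convex_on (Fset xL xH) (c t)) ->
  unif_bounded_subgrad (Fset xL xH) c ->
  (forall i, (2 <= m i)%N) ->
  (fun i => spacing xL xH (m i)) @ \oo --> (0 : R) ->
  {ae (@lebesgue_measure R), forall r : R, r \in `]-1, 1[ ->
    forall (xd : nat -> nat -> R) (xc : nat -> R),
      (forall i t, (0 < t)%N ->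
         is_output (grid xL xH (m i)) (fun x => theta * nrm x) c r t (xd i t)) ->
      (forall t, (0 < t)%N ->
         is_output (Fset xL xH) (fun x => theta * nrm x) c r t (xc t)) ->
      forall t, (0 < t)%N ->
        (fun i => `|xd i t - xc t|) @ \oo --> (0 : R)}.
Proof.
move=> xL_ge0 xLH nrm_norm theta_ge1 c_ge0 _ c_subgrad m_gt1 spacing_cvg0.
have theta_gt0 : 0 < theta := lt_le_trans ltr01 theta_ge1.
set N := fun x => theta * nrm x; set F := Fset xL xH.
have N_ge0 : forall x, 0 <= N x := scaled_norm_ge0 nrm_norm theta_gt0.
set a := theta * nrm 1.
have N_lip : forall x y, N x <= N y + a * `|x - y| := scaled_norm_lip nrm_norm theta_gt0.
have N_ler : {in F &, forall x y, N x <= N y -> x <= y}.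
  move=> x y /[!inE] /andP[xL_x _] /andP[xL_y _].
  exact/(scaled_norm_ler nrm_norm theta_gt0 (le_trans xL_ge0 xL_x) (le_trans xL_ge0 xL_y)).
have [G G_ge0 c_lip] := unif_bounded_subgrad_lip (Fset_left (ltW xLH)) c_subgrad.
apply: (negligibleS _ (ambiguous_negligible c N_ler)) => r /=.
apply: contra_notP => r_unamb r_in xd xc xd_out xc_out [//|t] _.
have r_le1 : `|r| <= 1 by move: r_in; rewrite in_itv /= ler_norml => /andP[? ?]; rewrite !ltW.
pose Y z := work F N c t z + r * N z.
have Y_cont : continuous Y.
  apply: (@lip_continuous _ _ (a + a)) => x y.
  have := work_lip N_ge0 N_lip c_ge0 (@subset_refl _ F) t x y.
  by have := scale_lip N_lip x y r_le1; rewrite /Y mulrDl; lra.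
have [xs_F xs_min] := xc_out t.+1 isT.
have xs_argmin z : xL <= z <= xH -> z != xc t.+1 -> Y (xc t.+1) < Y z.
  move=> z_F; rewrite lt_neqAle xs_min // andbT; apply: contra => /eqP Y_eq.
  apply/eqP/(output_unique r_unamb _ (xc_out t.+1 isT)); split => // w w_F.
  by have := xs_min w w_F; rewrite /Y /= in Y_eq *; lra.
pose K := t%:R * (G + a + a) + a + a.
apply: (@cvg_strict_argmin _ _ Y_cont _ _ _ _ (fun i => K * spacing xL xH (m i)) xs_F xs_argmin).
- move=> i; exact: grid_sub xLH (m_gt1 i) _ (xd_out i t.+1 isT).1.
- move=> i; exact (grid_output_near_opt N_ge0 N_lip c_ge0 xLH (m_gt1 i) G_ge0 c_lip r_le1 (xd_out i t.+1 isT) xs_F).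
- by rewrite -(mulr0 K); apply: cvgMl_tmp.
Qed.
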